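(* Let $T$ be a tree. Then $\gamma_{rdR}(T)=\gamma(T)+\gamma_r(T)$ if and only if $T$ is a star (i.e., $T\cong K_{1,m}$ for some $m\ge 0$, with $K_{1,0}=K_1$).
   Context: All graphs are finite and simple. An RDRD function of $G$ is a function $f:V(G)\to\{0,1,2,3\}$ such that every vertex with value $0$ has at least two neighbors with value $2$ or at least one neighbor with value $3$, every vertex with value $1$ has a neighbor with value $2$ or $3$, and the subgraph induced by the vertices with value $0$ has no isolated vertices; $\gamma_{rdR}(G)$ is the minimum of $\sum_v f(v)$ over RDRD functions. $\gamma(G)$ is the domination number; $\gamma_r(G)$ is the minimum cardinality of a set $S$ such that every vertex outside $S$ has a neighbor in $S$ and a neighbor outside $S$. *)

(* A finite simple graph is a symmetric irreflexive relation
   e : rel T on a finType T (vertex set = T). *)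
From mathcomp Require Import all_boot all_order.
Set Implicit Arguments. Unset Strict Implicit. Unset Printing Implicit Defensive.

Section Graphs.
Variables (T : finType) (e : rel T).

Definition simple_graph : Prop := symmetric e /\ irreflexive e.

Definition connected_graph : Prop := forall x y : T, connect e x y.

(* a cycle: distinct vertices x :: p (at least 3), consecutive adjacent,
   last adjacent to first *)
Definition has_cycle : Prop :=
  exists (x : T) (p : seq T),
    [/\ 2 <= size p, uniq (x :: p), path e x p & e (last x p) x].

Definition is_tree : Prop :=
  simple_graph /\ 0 < #|T| /\ connected_graph /\ ~ has_cycle.

Definition is_star : Prop :=
  exists c : T, forall x y : T, e x y = ((x == c) && (y != c)) || ((y == c) && (x != c)).

Definition dominating (S : {set T}) : bool :=
  [forall v, (v \notin S) ==> [exists u, e v u && (u \in S)]].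

Definition domination_number : nat :=
  #|[arg min_(S < [set: T] | dominating S) #|S|]|.

Definition restrained_dominating (S : {set T}) : bool :=
  [forall v, (v \notin S) ==>
     ([exists u, e v u && (u \in S)] && [exists u, e v u && (u \notin S)])].

Definition restrained_domination_number : nat :=
  #|[arg min_(S < [set: T] | restrained_dominating S) #|S|]|.

Definition is_RDRD (f : {ffun T -> 'I_4}) : bool :=
  [forall v,
     [&& ((f v : nat) == 0) ==>
           ((2 <= #|[set u | e v u & (f u : nat) == 2]|)
            || [exists u, e v u && ((f u : nat) == 3)]),
         ((f v : nat) == 1) ==> [exists u, e v u && (2 <= (f u : nat))]
       & ((f v : nat) == 0) ==> [exists u, e v u && ((f u : nat) == 0)]]].

Definition weight (f : {ffun T -> 'I_4}) : nat := \sum_(v : T) (f v : nat).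

Definition rdrd_number : nat :=
  weight [arg min_(f < [ffun _ => (inord 3 : 'I_4)] | is_RDRD f) weight f].

End Graphs.

From mathcomp Require Import all_boot all_order.
From mathcomp Require Import zify.
From Stdlib Require Import Classical.
Set Implicit Arguments. Unset Strict Implicit. Unset Printing Implicit Defensive.

(* For an RDRD function f write V_k = {v | f v >= k}.  Then
   weight f = |V_1| + |V_2| + |V_3|, V_2 is dominating and V_1 is restrained
   dominating, so  gamma + gamma_r + |V_3| <= weight f  for every RDRD f.

   In a star the only restrained dominating set is V, so gamma_r = n,
   and the function 2 on the centre, 1 elsewhere is RDRD of weight n + 1
   <= gamma + gamma_r; with the lower bound this gives equality.

   A connected graph that is not a star has an edge xy whose two
   endpoints both have further neighbours; we show that then every RDRD f
   satisfies gamma + gamma_r < weight f.  If V_3 is nonempty this is the lower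
   bound.  Otherwise: if f has no zero, V - {x, y} is restrained dominating;
   if some positive vertex y sees both a zero and a positive vertex, V_1 - {y}
   is restrained dominating; and otherwise, for a zero v with two neighbours
   a, b of value 2, the set {v} u V_2 - {a, b} is dominating, because a tree
   has no 4-cycle.  In each case one of the two lower bounds becomes strict. *)

Section ArgMin.
Variables (I : finType) (P : pred I) (F : I -> nat) (i0 : I).
Hypothesis P_i0 : P i0.

Lemma arg_min_feasible : P [arg min_(i < i0 | P i) F i].
Proof. by case: (arg_minnP F P_i0). Qed.

Lemma arg_min_le i : P i -> F [arg min_(j < i0 | P j) F j] <= F i.
Proof. by case: (arg_minnP F P_i0) => j _; apply. Qed.

End ArgMin.

(* The three parameters are minima over feasible sets containing the whole
   vertex set (resp. the constant function 3), so they are attained and are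
   lower bounds for the size (weight) of every feasible set (function). *)
Section Extremal.
Variables (T : finType) (e : rel T).

Lemma dominating_setT : dominating e [set: T].
Proof. by apply/forallP => v; rewrite in_setT. Qed.

Lemma restrained_dominating_setT : restrained_dominating e [set: T].
Proof. by apply/forallP => v; rewrite in_setT. Qed.

Lemma RDRD_const3 : is_RDRD e [ffun _ => inord 3].
Proof. by apply/forallP => v; rewrite ffunE inordK. Qed.

Lemma domination_le S : dominating e S -> domination_number e <= #|S|.
Proof. exact: (arg_min_le (fun S : {set T} => #|S|) dominating_setT). Qed.

Lemma domination_attained :
  exists2 S, dominating e S & domination_number e = #|S|.
Proof.
by eexists; first exact: (arg_min_feasible (fun S : {set T} => #|S|) dominating_setT).
Qed.

Lemma restrained_le S :
  restrained_dominating e S -> restrained_domination_number e <= #|S|.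
Proof. exact: (arg_min_le (fun S : {set T} => #|S|) restrained_dominating_setT). Qed.

Lemma restrained_attained :
  exists2 S, restrained_dominating e S & restrained_domination_number e = #|S|.
Proof.
by eexists;
  first exact: (arg_min_feasible (fun S : {set T} => #|S|) restrained_dominating_setT).
Qed.

Lemma rdrd_le f : is_RDRD e f -> rdrd_number e <= weight f.
Proof. exact: (arg_min_le (@weight T) RDRD_const3). Qed.

Lemma rdrd_attained : exists2 f, is_RDRD e f & rdrd_number e = weight f.
Proof. by eexists; first exact: (arg_min_feasible (@weight T) RDRD_const3). Qed.

End Extremal.

Definition level_set (T : finType) (f : {ffun T -> 'I_4}) (k : nat) : {set T} :=
  [set v | k <= (f v : nat)].

(* Counting each vertex once per level it reaches. *)
Lemma weight_levels (T : finType) (f : {ffun T -> 'I_4}) :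
  weight f = #|level_set f 1| + #|level_set f 2| + #|level_set f 3|.
Proof.
have card_level k : #|level_set f k| = \sum_v (k <= f v : nat).
  rewrite -sum1_card big_mkcond /=; apply: eq_bigr => v _.
  by rewrite inE; case: (_ <= _).
rewrite /weight !card_level -!big_split /=.
by apply: eq_bigr => v _; case: (f v) => [[|[|[|[|k]]]] ?].
Qed.

Section RDRDFunctions.
Variables (T : finType) (e : rel T) (f : {ffun T -> 'I_4}).
Hypothesis f_RDRD : is_RDRD e f.

Lemma RDRDP v :
  [/\ (f v : nat) = 0 ->
        (2 <= #|[set u | e v u & (f u : nat) == 2]|)
        || [exists u, e v u && ((f u : nat) == 3)],
      (f v : nat) = 1 -> exists2 u, e v u & 2 <= (f u : nat)
    & (f v : nat) = 0 -> exists2 u, e v u & (f u : nat) = 0].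
Proof.
move: f_RDRD => /forallP /(_ v) /and3P [zero_cond one_cond zero_nbr].
split => fv.
- by move: zero_cond; rewrite fv.
- by move: one_cond; rewrite fv => /existsP [u /andP [] ]; exists u.
- by move: zero_nbr; rewrite fv => /existsP [u /andP [? /eqP]]; exists u.
Qed.

Lemma RDRD_strong_neighbour v :
  (f v : nat) < 2 -> exists2 u, e v u & 2 <= (f u : nat).
Proof.
have [zero_cond one_cond _] := RDRDP v.
case fv: (f v : nat) => [|[|//]] _; last exact: one_cond.
case/orP: (zero_cond fv) => [/ltnW /card_gt0P [u] | /existsP [u]].
- by rewrite inE => /andP [? /eqP fu]; exists u; rewrite ?fu.
- by move=> /andP [? /eqP fu]; exists u; rewrite ?fu.
Qed.

Lemma RDRD_zero_two_neighbours v :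
  (forall u, (f u : nat) != 3) -> (f v : nat) = 0 ->
  exists a b, [/\ a != b, e v a, e v b, (f a : nat) = 2 & (f b : nat) = 2].
Proof.
move=> no3 fv; have [zero_cond _ _] := RDRDP v.
case/orP: (zero_cond fv) => [|/existsP [u /andP [_ fu]]]; last by case/negP: (no3 u).
move=> /card_gt1P [a [b [+ + ab]]]; rewrite !inE.
by move=> /andP [? /eqP ?] /andP [? /eqP ?]; exists a, b.
Qed.

Lemma level2_dominating : dominating e (level_set f 2).
Proof.
apply/forallP => v; apply/implyP; rewrite inE -ltnNge.
by case/RDRD_strong_neighbour => u vu fu; apply/existsP; exists u; rewrite vu inE.
Qed.

(* V_1 is restrained dominating: a vertex outside it has value 0, hence a
   neighbour of value >= 2 and a neighbour of value 0. *)
Lemma level1_restrained : restrained_dominating e (level_set f 1).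
Proof.
apply/forallP => v; apply/implyP; rewrite inE -ltnNge ltnS leqn0 => /eqP fv.
have [u vu fu] : exists2 u, e v u & 2 <= (f u : nat).
  by apply: RDRD_strong_neighbour; rewrite fv.
have [_ _ /(_ fv) [w vw fw]] := RDRDP v.
apply/andP; split; apply/existsP; [exists u | exists w].
- by rewrite vu inE (leq_trans _ fu).
- by rewrite vw inE fw.
Qed.

Lemma RDRD_lower_bound :
  domination_number e + restrained_domination_number e + #|level_set f 3|
  <= weight f.
Proof.
rewrite weight_levels.
have := domination_le level2_dominating; have := restrained_le level1_restrained.
lia.
Qed.

End RDRDFunctions.

Section Graphs.
Variables (T : finType) (e : rel T).
Hypotheses (e_sym : symmetric e) (e_irr : irreflexive e).

(* The empty set dominates nothing, so a nonempty graph has gamma >= 1. *)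
Lemma domination_pos : 0 < #|T| -> 0 < domination_number e.
Proof.
case/card_gt0P => v _; have [S S_dom ->] := domination_attained e.
rewrite card_gt0; apply: contraTneq S_dom => ->.
by apply/forallPn; exists v; rewrite inE /=; apply/existsPn => u; rewrite inE andbF.
Qed.

(* A hub: a vertex c all of whose neighbours are leaves hanging at c.  In a
   connected graph a hub is adjacent to every other vertex, since no walk can
   leave the closed neighbourhood of c. *)
Definition hub (c : T) : Prop := forall x, e c x -> forall z, e x z -> z = c.

Lemma hub_star c : hub c -> connected_graph e -> is_star e.
Proof.
move=> c_hub e_conn.
have near_c y : y = c \/ e c y.
  have /connectP [p p_path ->] := e_conn c y.
  have walk s q : s = c \/ e c s -> path e s q -> last s q = c \/ e c (last s q).
    elim: q s => [|x q IH] s //= s_near /andP [sx q_path]; apply: IH q_path.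
    case: s_near => [s_c | cs]; first by right; rewrite -s_c.
    by left; exact: c_hub sx.
  by apply: walk p_path; left.
exists c => x y.
case: (eqVneq x c) => [->|xc]; case: (eqVneq y c) => [->|yc] /=.
- exact: e_irr.
- by case: (near_c y) => // y_c; case/eqP: yc.
- by rewrite e_sym; case: (near_c x) => // x_c; case/eqP: xc.
- case: (near_c x) => [x_c | cx]; first by case/eqP: xc.
  by apply/negbTE/negP => /(c_hub x cx) y_c; case/eqP: yc.
Qed.

(* If every edge has an endpoint that is a leaf, a nonempty connected graph
   is a star: a vertex with two distinct neighbours (or, failing that, any
   vertex) is a hub. *)
Lemma star_of_leaf_edges :
  0 < #|T| -> connected_graph e ->
  (forall x y, e x y -> (forall z, e x z -> z = y) \/ (forall z, e y z -> z = x)) ->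
  is_star e.
Proof.
move=> T_gt0 e_conn leaf_edge.
suff [c c_hub] : exists c, hub c by exact: hub_star c_hub e_conn.
case: (pickP (fun c => [exists a, exists b, [&& e c a, e c b & a != b]])) => [c|deg_le1].
- case/existsP=> a /existsP [b /and3P [ca cb ab]].
  exists c => x cx z xz; case: (leaf_edge c x cx) => [c_leaf|]; last by apply.
  by move: ab; rewrite (c_leaf a ca) (c_leaf b cb) eqxx.
- case/card_gt0P: T_gt0 => c _; exists c => x cx z xz.
  apply/eqP; apply: contraFT (deg_le1 x) => zc; apply/existsP; exists c.
  by apply/existsP; exists z; rewrite e_sym cx xz eq_sym.
Qed.

Lemma not_star_inner_edge :
  0 < #|T| -> connected_graph e -> ~ is_star e ->
  exists x y z1 z2, [/\ e x y, e x z1, z1 != y, e y z2 & z2 != x].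
Proof.
move=> T_gt0 e_conn not_star; apply: NNPP => no_inner.
apply: not_star; apply: star_of_leaf_edges => // x y xy.
case: (boolP [forall z, e x z ==> (z == y)]) => [/forallP x_leaf|].
  by left => z /(implyP (x_leaf z)) /eqP.
case/forallPn=> z1; rewrite negb_imply => /andP [xz1 z1y]; right.
case: (boolP [forall z, e y z ==> (z == x)]) => [/forallP y_leaf|].
  by move=> z /(implyP (y_leaf z)) /eqP.
case/forallPn=> z2; rewrite negb_imply => /andP [yz2 z2x].
by case: no_inner; exists x, y, z1, z2.
Qed.

(* For such an inner edge xy, the complement of {x, y} is restrained
   dominating: x sees z1 inside and y outside, symmetrically for y. *)
Lemma restrained_inner_edge x y z1 z2 :
  e x y -> e x z1 -> z1 != y -> e y z2 -> z2 != x ->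
  restrained_domination_number e + 2 <= #|T|.
Proof.
move=> xy xz1 z1y yz2 z2x.
have xy_neq : x != y by apply: contraTneq xy => ->; rewrite e_irr.
have z1x : z1 != x by apply: contraTneq xz1 => ->; rewrite e_irr.
have z2y : z2 != y by apply: contraTneq yz2 => ->; rewrite e_irr.
have S_restr : restrained_dominating e (~: [set x; y]).
  apply/forallP => v; apply/implyP; rewrite !inE negbK => /orP [] /eqP ->.
  - apply/andP; split; apply/existsP; [exists z1 | exists y].
    + by rewrite xz1 !inE negb_or z1x z1y.
    + by rewrite xy !inE eqxx orbT.
  - apply/andP; split; apply/existsP; [exists z2 | exists x].
    + by rewrite yz2 !inE negb_or z2x z2y.
    + by rewrite e_sym xy !inE eqxx.
have := restrained_le S_restr; have := cardsC [set x; y].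
rewrite cards2 xy_neq; lia.
Qed.

Lemma acyclic_no_square u v a b :
  ~ has_cycle e -> u != v -> a != b -> e u a -> e u b -> e v a -> e v b -> False.
Proof.
move=> acyclic uv ab ua ub va vb.
have neq x y : e x y -> x != y by move=> xy; apply: contraTneq xy => ->; rewrite e_irr.
apply: acyclic; exists u, [:: a; v; b]; split => //=.
- rewrite !inE !negb_or uv (neq _ _ ua) (neq _ _ ub) ab (neq _ _ vb) andbT /=.
  by rewrite eq_sym neq.
- by rewrite ua e_sym va vb.
- by rewrite e_sym.
Qed.

(* In a star with centre c, every vertex other than c has c as its only
   neighbour, so no vertex can be left outside a restrained dominating set. *)
Lemma star_restrained_full S :
  is_star e -> restrained_dominating e S -> S = [set: T].
Proof.
move=> [c star_c] S_restr; apply/setP => v; rewrite in_setT; apply: contraT => vS.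
have nbr_c x y : x != c -> e x y -> y = c.
  by move=> xc; rewrite star_c (negbTE xc) /= andbT => /eqP.
have /andP [/existsP [u /andP [vu uS]] /existsP [t /andP [vt tS]]] :=
  implyP (forallP S_restr v) vS.
case: (eqVneq v c) => [vc | vc]; last first.
  by move: uS tS; rewrite (nbr_c _ _ vc vu) (nbr_c _ _ vc vt) => ->.
have tc : t != c by apply: contraTneq vt => ->; rewrite vc e_irr.
have /andP [/existsP [s /andP [ts sS]] _] := implyP (forallP S_restr t) tS.
by move: sS vS; rewrite (nbr_c _ _ tc ts) -vc => ->.
Qed.

Lemma star_rdrd_upper : is_star e -> rdrd_number e <= #|T| + 1.
Proof.
move=> [c star_c].
pose g : {ffun T -> 'I_4} := [ffun v => if v == c then inord 2 else inord 1].
have gE v : (g v : nat) = if v == c then 2 else 1.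
  by rewrite ffunE; case: (v == c); rewrite inordK.
have g_RDRD : is_RDRD e g.
  apply/forallP => v; rewrite !gE; case: (eqVneq v c) => [//|vc] /=.
  by rewrite andbT; apply/existsP; exists c; rewrite gE eqxx star_c eqxx vc orbT.
have weight_g : weight g = #|T| + 1.
  rewrite /weight (eq_bigr (fun v => 1 + (v == c))); last first.
    by move=> v _; rewrite gE; case: (v == c).
  rewrite big_split /= sum1_card (bigD1 c) //= eqxx big1 //.
  by move=> v /negbTE ->.
by rewrite -weight_g; apply: rdrd_le.
Qed.

Lemma star_equality :
  0 < #|T| -> is_star e ->
  rdrd_number e = domination_number e + restrained_domination_number e.
Proof.
move=> T_gt0 star.
have [f f_RDRD opt] := rdrd_attained e.
have := star_rdrd_upper star; have := RDRD_lower_bound f_RDRD.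
have := domination_pos T_gt0; have [S S_restr ->] := restrained_attained e.
rewrite opt (star_restrained_full star S_restr) cardsT; lia.
Qed.

End Graphs.

Section Strictness.
Variables (T : finType) (e : rel T) (f : {ffun T -> 'I_4}).
Hypotheses (e_sym : symmetric e) (e_irr : irreflexive e).
Hypotheses (f_RDRD : is_RDRD e f) (no3 : forall u, (f u : nat) != 3).

(* A positive vertex y with a zero neighbour w and a positive neighbour z can
   be dropped from V_1: y keeps the inside neighbour z and outside neighbour w,
   and each zero vertex keeps one of its two value-2 neighbours. *)
Lemma restrained_drop_mixed y w z :
  1 <= (f y : nat) -> e y w -> (f w : nat) = 0 -> e y z -> 1 <= (f z : nat) ->
  restrained_domination_number e < #|level_set f 1|.
Proof.
move=> fy yw fw yz fz.
have S_restr : restrained_dominating e (level_set f 1 :\ y).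
  apply/forallP => u; apply/implyP; rewrite !inE negb_and negbK -ltnNge ltnS leqn0.
  case/orP => [/eqP -> | /eqP fu].
  - apply/andP; split; apply/existsP; [exists z | exists w].
    + by rewrite yz !inE fz andbT; apply: contraTneq yz => ->; rewrite e_irr.
    + by rewrite yw !inE fw andbF.
  - have [_ _ /(_ fu) [w' uw' fw']] := RDRDP f_RDRD u.
    have [a [b [ab ua ub fa fb]]] := RDRD_zero_two_neighbours f_RDRD no3 fu.
    apply/andP; split; apply/existsP; last by exists w'; rewrite uw' !inE fw' andbF.
    case: (eqVneq a y) => [ay | ay]; last by exists a; rewrite ua !inE fa ay.
    by exists b; rewrite ub !inE fb andbT -ay eq_sym.
have := restrained_le S_restr; have := cardsD1 y (level_set f 1).
rewrite inE fy; lia.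
Qed.

(* If no positive vertex sees both a zero and a positive vertex, pick a zero
   v with value-2 neighbours a, b (whose neighbours are then all zeros).  In
   an acyclic graph {v} u V_2 - {a, b} is dominating: a vertex of value 0 or
   1 outside it has a value-2 neighbour other than a and b. *)
Lemma dominating_drop_separated v :
  ~ has_cycle e -> (f v : nat) = 0 ->
  (forall y w z, 1 <= (f y : nat) -> e y w -> (f w : nat) = 0 -> e y z ->
     (f z : nat) = 0) ->
  domination_number e < #|level_set f 2|.
Proof.
move=> acyclic fv separated.
have [a [b [ab va vb fa fb]]] := RDRD_zero_two_neighbours f_RDRD no3 fv.
have a_zeros u : e a u -> (f u : nat) = 0.
  by move=> au; apply: (separated a v u) => //; rewrite ?fa // e_sym.
have b_zeros u : e b u -> (f u : nat) = 0.
  by move=> bu; apply: (separated b v u) => //; rewrite ?fb // e_sym.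
have D_dom : dominating e (v |: (level_set f 2 :\: [set a; b])).
  apply/forallP => u; apply/implyP; rewrite !inE negb_or negb_and !negbK.
  case/andP=> uv; case: (boolP ((u == a) || (u == b))) => [u_ab _ | ].
    by apply/existsP; exists v; rewrite !inE eqxx andbT; case/orP: u_ab => /eqP ->;
       rewrite e_sym.
  rewrite negb_or => /andP [ua_neq ub_neq]; rewrite /= -leqNgt.
  case fu: (f u : nat) => [|[|//]] _.
  - have [p [q [pq up uq fp fq]]] := RDRD_zero_two_neighbours f_RDRD no3 fu.
    case: (boolP ((p == a) || (p == b))) => p_ab; last first.
      by apply/existsP; exists p; rewrite up !inE fp leqnn andbT p_ab orbT.
    case: (boolP ((q == a) || (q == b))) => q_ab; last first.
      by apply/existsP; exists q; rewrite uq !inE fq leqnn andbT q_ab orbT.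
    have [ua ub] : e u a /\ e u b.
      by case/orP: p_ab => /eqP Ep; case/orP: q_ab => /eqP Eq; subst p q;
         rewrite ?eqxx in pq.
    by case: (acyclic_no_square e_sym e_irr acyclic uv ab ua ub va vb).
  - have [g ug fg] : exists2 g, e u g & 2 <= (f g : nat).
      by apply: (RDRD_strong_neighbour f_RDRD); rewrite fu.
    have g_ab : (g != a) && (g != b).
      apply/andP; split; apply: contraTneq ug => ->; rewrite e_sym.
      - by apply/negP => /a_zeros; rewrite fu.
      - by apply/negP => /b_zeros; rewrite fu.
    by apply/existsP; exists g; rewrite ug !inE negb_or g_ab fg orbT.
have := domination_le D_dom; have := cardsID [set a; b] (level_set f 2).
rewrite cardsU1; have -> : level_set f 2 :&: [set a; b] = [set a; b].
  by apply/setIidPr/subsetP => x; rewrite !inE => /orP [] /eqP ->; rewrite ?fa ?fb.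
rewrite cards2 ab; case: (v \notin _) => /=; lia.
Qed.

End Strictness.

Lemma non_star_strict (T : finType) (e : rel T) (f : {ffun T -> 'I_4}) :
  is_tree e -> ~ is_star e -> is_RDRD e f ->
  domination_number e + restrained_domination_number e < weight f.
Proof.
move=> [[e_sym e_irr] [T_gt0 [e_conn acyclic]]] not_star f_RDRD.
have lower := RDRD_lower_bound f_RDRD.
have [u /eqP fu | no3] := pickP (fun u => (f u : nat) == 3).
  have : 0 < #|level_set f 3| by apply/card_gt0P; exists u; rewrite inE fu.
  lia.
have {}no3 u : (f u : nat) != 3 by rewrite no3.
have dom := domination_le (level2_dominating f_RDRD).
have restr := restrained_le (level1_restrained f_RDRD).
rewrite weight_levels.
have [v /eqP fv | no0] := pickP (fun v => (f v : nat) == 0); last first.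
  have [x [y [z1 [z2 [xy xz1 z1y yz2 z2x]]]]] :=
    not_star_inner_edge e_sym e_irr T_gt0 e_conn not_star.
  have := restrained_inner_edge e_sym e_irr xy xz1 z1y yz2 z2x.
  have -> : level_set f 1 = [set: T] by apply/setP => w; rewrite !inE lt0n no0.
  rewrite cardsT; lia.
have [[y [w [z [fy yw fw yz fz]]]] | no_mixed] := classic (exists y w z,
  [/\ 1 <= (f y : nat), e y w, (f w : nat) = 0, e y z & 1 <= (f z : nat)]).
  by have := restrained_drop_mixed e_irr f_RDRD no3 fy yw fw yz fz; lia.
have separated y w z : 1 <= (f y : nat) -> e y w -> (f w : nat) = 0 -> e y z ->
    (f z : nat) = 0.
  move=> fy yw fw yz; apply/eqP; rewrite -leqn0 leqNgt; apply/negP => fz.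
  by apply: no_mixed; exists y, w, z.
by have := dominating_drop_separated e_sym e_irr f_RDRD no3 acyclic fv separated; lia.
Qed.

Unset Implicit Arguments.

Theorem proposition2p10 (T : finType) (e : rel T) :
  is_tree e ->
  (rdrd_number e = domination_number e + restrained_domination_number e
   <-> is_star e).
Proof.
move=> tree; have [[_ e_irr] [T_gt0 _]] := tree; split => [opt_eq | star].
- apply: NNPP => not_star; have [f f_RDRD f_opt] := rdrd_attained e.
  by have := non_star_strict tree not_star f_RDRD; rewrite -f_opt opt_eq ltnn.
- exact: star_equality e_irr T_gt0 star.
Qed.
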